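(* Let $d \geq 2$, $j \in [0,d-1]$ and $N \geq 0$. Write $q = \lfloor N/d \rfloor$, $\rho = \overline{(N)}_d$ and $c = \overline{(j - t_d(q))}_d$. Then $$\sum_{k=0}^{N} a_{j,d}(k) = \frac{dN(N+1)}{2} + \frac{q\,d(d-1)}{2} + c(\rho+1) - \frac{\rho(\rho+1)}{2} + d\max\{\rho - c, 0\}.$$
   Context: Let $d \geq 2$ be an integer. For an integer $x$, $\overline{(x)}_d$ denotes the unique integer in $[0,d-1]$ congruent to $x$ modulo $d$. For $n \geq 0$, $s_d(n)$ denotes the sum of the base-$d$ digits of $n$, and $t_d(n) = \overline{(s_d(n))}_d$. For $j \in [0,d-1]$, $(a_{j,d}(n))_{n\geq 0}$ is the strictly increasing enumeration (indexed from $n=0$) of all nonnegative integers $k$ with $s_d(k) \equiv j \pmod d$. *)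

From mathcomp Require Import all_boot all_order all_algebra.
Set Implicit Arguments. Unset Strict Implicit. Unset Printing Implicit Defensive.

(* Sum of base-d digits of n, computed with fuel (fuel n suffices for d >= 2). *)
Fixpoint digsum_aux (d fuel n : nat) : nat :=
  match fuel with
  | 0 => 0
  | f.+1 => if n is 0 then 0 else n %% d + digsum_aux d f (n %/ d)
  end.

Definition sd (d n : nat) : nat := digsum_aux d n n.

Definition td (d n : nat) : nat := sd d n %% d.

From mathcomp Require Import all_boot all_order all_algebra.
Import Order.TTheory GRing.Theory Num.Theory.
From mathcomp Require Import zify.

Set Implicit Arguments.
Unset Strict Implicit.
Unset Printing Implicit Defensive.

(* Since s_d(m d + r) = s_d(m) + r for r < d, each block [m d, m d + d) contains
   exactly one element of the digit-sum class j mod d, namely m d + c(m) with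
   c(m) = (j - t_d(m)) mod d.  Hence a_{j,d}(n) = n d + c(n), and within a block
   the offsets c(m d + r) = c(m) - r (mod d) run through all residues, so each
   full block contributes d(d-1)/2 to the sum of offsets and the last, partial
   block is summed explicitly.  The identity is proved doubled, in nat, and only
   halved at the end. *)

Lemma incr_enum_unique (f g : nat -> nat) :
  {homo f : m n / m < n} -> {homo g : m n / m < n} ->
  (forall k, (exists n, f n = k) <-> (exists n, g n = k)) -> f =1 g.
Proof.
move=> incr_f incr_g same_range n; elim/ltn_ind: n => n IH.
have [p gp_eq] : exists p, g p = f n by apply/same_range; exists n.
have [p' fp'_eq] : exists p, f p = g n by apply/same_range; exists n.
have le_np : n <= p.
  rewrite leqNgt; apply/negP => lt_pn.
  by have := incr_f _ _ lt_pn; rewrite IH // gp_eq ltnn.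
have le_np' : n <= p'.
  rewrite leqNgt; apply/negP => lt_pn.
  by have := incr_g _ _ lt_pn; rewrite -IH // fp'_eq ltnn.
have := ltnW_homo incr_g le_np; have := ltnW_homo incr_f le_np'; lia.
Qed.

Lemma mul2n_sum_nat n : 2 * \sum_(0 <= k < n.+1) k = n * n.+1.
Proof. by elim: n => [|n IH]; rewrite ?big_nat1 // big_nat_recr //= mulnDr IH; nia. Qed.

Lemma mul2n_half_mulS m n : 2 * ((m * (n * n.+1)) %/ 2) = m * (n * n.+1).
Proof. by rewrite -mul2n_sum_nat mulnCA mulKn. Qed.

Section DigitSumClass.

Variable d : nat.
Hypothesis d_gt1 : 1 < d.
Let d_gt0 : 0 < d := ltnW d_gt1.

Lemma digsum_aux_fuel f1 f2 n : n <= f1 -> n <= f2 ->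
  digsum_aux d f1 n = digsum_aux d f2 n.
Proof.
elim: f1 f2 n => [|f1 IH] [|f2] [|n] //= le_n_f1 le_n_f2.
have lt_div : n.+1 %/ d < n.+1 by exact: ltn_Pdiv.
by congr (_ + _); apply: IH; lia.
Qed.

Lemma sd_rec n : sd d n = if n is 0 then 0 else n %% d + sd d (n %/ d).
Proof.
case: n => [//|n]; rewrite /sd /=; congr (_ + _).
have lt_div : n.+1 %/ d < n.+1 by exact: ltn_Pdiv.
by apply: digsum_aux_fuel; lia.
Qed.

Lemma sd_mulD m r : r < d -> sd d (m * d + r) = sd d m + r.
Proof.
move=> lt_r_d; rewrite sd_rec.
case E: (m * d + r) => [|k].
  by have [-> ->] : m = 0 /\ r = 0 by nia.
rewrite -E modnMDl modn_small // divnMDl //.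
by rewrite divn_small // addn0 addnC.
Qed.

Lemma td_lt n : td d n < d.
Proof. exact: ltn_pmod. Qed.

Variable j : nat.
Hypothesis j_lt_d : j < d.

Definition offset n := if td d n <= j then j - td d n else j + d - td d n.

Lemma offset_lt n : offset n < d.
Proof. by have := td_lt n; rewrite /offset; case: ifP; lia. Qed.

Lemma modn_add_small t r : t < d -> r < d ->
  (t + r) %% d = if t + r < d then t + r else t + r - d.
Proof.
move=> lt_t lt_r; rewrite modnD // !modn_small //.
by case: ltnP; rewrite ?mul0n ?mul1n ?subn0.
Qed.

Lemma offset_mulD m r : r < d ->
  offset (m * d + r) = if r <= offset m then offset m - r else offset m + d - r.
Proof.
move=> lt_r_d; have lt_t := td_lt m.
rewrite /offset /td sd_mulD // -modnDml -/(td d m) modn_add_small //.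
by do 4 (try case: ifP); lia.
Qed.

Lemma sd_class_offset k : (sd d k %% d == j) = (k == k %/ d * d + offset (k %/ d)).
Proof.
have lt_r : k %% d < d by rewrite ltn_pmod.
have lt_t := td_lt (k %/ d).
rewrite {1}(divn_eq k d) [X in _ = (X == _)](divn_eq k d) sd_mulD // eqn_add2l.
rewrite -modnDml -/(td d (k %/ d)) modn_add_small // /offset.
by do 2 case: ifP => ?; apply/eqP/eqP; lia.
Qed.

Lemma sd_offset m : sd d (m * d + offset m) %% d = j.
Proof. by apply/eqP; rewrite sd_class_offset divnMDl // divn_small ?offset_lt ?addn0. Qed.

Lemma offset_block_lt m n : m < n -> m * d + offset m < n * d + offset n.
Proof.
move=> lt_mn; have := offset_lt m.
have : m.+1 * d <= n * d by rewrite leq_mul2r lt_mn orbT.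
by rewrite mulSn; lia.
Qed.

Lemma enum_sd_class (a : nat -> nat) : {homo a : m n / m < n} ->
  (forall k, sd d k = j %[mod d] <-> exists n, a n = k) ->
  forall n, a n = n * d + offset n.
Proof.
move=> incr_a a_range.
apply: incr_enum_unique => // [m n|k]; first exact: offset_block_lt.
rewrite -a_range (modn_small j_lt_d); split.
  by move/eqP; rewrite sd_class_offset => /eqP ->; exists (k %/ d).
by move=> [n <-]; rewrite sd_offset.
Qed.

Lemma sum_offset_block_prefix m R : R <= d ->
  2 * \sum_(m * d <= k < m * d + R) offset k + R * R.-1
  = 2 * offset m * R + 2 * d * (R.-1 - offset m).
Proof.
elim: R => [|R IH] le_R_d; first by rewrite addn0 big_geq // !muln0.
rewrite addnS big_nat_recr ?leq_addr //= offset_mulD //.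
have := IH (ltnW le_R_d); have := offset_lt m.
set c := offset m => lt_c_d IH_R.
have sqS : R.+1 * R = R * R.-1 + 2 * R by case: (R) => //= r; nia.
rewrite /= sqS !mulnS; case: ifP => le_R_c.
  have [-> predR_c] : R - c = 0 /\ R.-1 - c = 0 by lia.
  by rewrite predR_c !muln0 in IH_R *; lia.
have -> : R - c = (R.-1 - c).+1 by lia.
by rewrite mulnS; lia.
Qed.

Lemma sum_offset_block m : 2 * \sum_(m * d <= k < m * d + d) offset k = d * d.-1.
Proof.
have := sum_offset_block_prefix m (leqnn d); have := offset_lt m.
set c := offset m => lt_c_d.
have split_dd : d * (d.-1 - c) + d * c = d * d.-1 by rewrite -mulnDr subnK //; lia.
lia.
Qed.

Lemma sum_offset_blocks q : 2 * \sum_(0 <= k < q * d) offset k = q * (d * d.-1).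
Proof.
elim: q => [|q IH]; first by rewrite mul0n big_geq.
rewrite (@big_cat_nat _ _ _ (q * d)) //=; last by rewrite leq_mul2r leqnSn orbT.
by rewrite mulnDr IH [q.+1 * d]mulSn [d + _]addnC sum_offset_block mulSn addnC.
Qed.

Lemma sum_enum_double N :
  2 * \sum_(0 <= k < N.+1) (k * d + offset k) + N %% d * (N %% d).+1
  = d * (N * N.+1) + N %/ d * (d * d.-1) + 2 * offset (N %/ d) * (N %% d).+1
    + 2 * d * (N %% d - offset (N %/ d)).
Proof.
rewrite big_split -big_distrl -(mul2n_sum_nat N) /=.
set S := \sum_(0 <= k < N.+1) k; set q := N %/ d; set rho := N %% d.
have lt_rho_d : rho < d by rewrite ltn_pmod.
have -> : N.+1 = q * d + rho.+1 by rewrite addnS -divn_eq.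
rewrite (@big_cat_nat _ _ _ (q * d)) ?leq_addr //=.
have := sum_offset_block_prefix q lt_rho_d; have := sum_offset_blocks q.
rewrite /=; lia.
Qed.

Lemma offset_modz q : (((j%:Z - (td d q)%:Z) %% d%:Z)%Z = (offset q)%:Z)%R.
Proof.
have lt_t := td_lt q; rewrite /offset; case: ifP => le_t_j.
  by rewrite subzn // modz_nat modn_small //; lia.
have -> : (j%:Z - (td d q)%:Z = (- 1) * d%:Z + (j + d - td d q)%:Z)%R.
  by rewrite -subzn; lia.
by rewrite modzMDl modz_nat modn_small //; lia.
Qed.

End DigitSumClass.

Theorem theorem2 (d j N : nat) (a : nat -> nat) :
  2 <= d -> j < d ->
  (forall m n, m < n -> a m < a n) ->
  (forall k, sd d k = j %[mod d] <-> exists n, a n = k) ->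
  let q := N %/ d in
  let rho := N %% d in
  let c : int := ((j%:Z - (td d q)%:Z) %% d%:Z)%Z in
  ((\sum_(0 <= k < N.+1) a k)%N%:Z =
     ((d * N * N.+1) %/ 2)%N%:Z + ((q * (d * d.-1)) %/ 2)%N%:Z
     + c * (rho.+1)%:Z - ((rho * rho.+1) %/ 2)%N%:Z
     + d%:Z * Num.max (rho%:Z - c) 0)%R.
Proof.
move=> d_gt1 j_lt_d incr_a a_range q rho c.
rewrite /c offset_modz // (eq_bigr _ (fun k _ => enum_sd_class d_gt1 j_lt_d incr_a a_range k)).
clear c incr_a a_range.
have sum_eq := sum_enum_double d_gt1 j_lt_d N.
have lt_c_d := offset_lt d_gt1 j_lt_d q.
have half_A := mul2n_half_mulS d N.
have half_B : 2 * ((q * (d * d.-1)) %/ 2) = q * (d * d.-1).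
  by have := mul2n_half_mulS q d.-1; rewrite prednK ?(ltnW d_gt1) // [d.-1 * d]mulnC.
have half_R := mul2n_half_mulS 1 rho; rewrite mul1n in half_R.
rewrite -/q -/rho -[2 * _ * rho.+1]mulnA -[2 * d * _]mulnA in sum_eq.
rewrite -[d * N * N.+1]mulnA -[(_%:Z * _)%R]PoszM.
set S := \sum_(_ <= _ < _) _ in sum_eq *; set c' := offset d j q in sum_eq lt_c_d *.
set A := d * _ in sum_eq half_A *; set B := q * _ in sum_eq half_B *.
set R := rho * _ in sum_eq half_R *; set C := c' * _ in sum_eq *.
set A2 := A %/ 2 in half_A *; set B2 := B %/ 2 in half_B *; set R2 := R %/ 2 in half_R *.
clearbody S A B R C A2 B2 R2.
case: (leqP rho c') => [le_rho_c|lt_c_rho].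
  have D0 : d * (rho - c') = 0 by rewrite (_ : rho - c' = 0) ?muln0 //; lia.
  by rewrite max_r ?subr_le0 // mulr0 addr0; lia.
rewrite max_l ?subr_ge0 ?lez_nat 1?ltnW // subzn 1?ltnW // -PoszM; lia.
Qed.
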